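(* Let $n\ge1$ and $z\in\{1,\dots,n+1\}$, and let $v_{n,z}=(a_1,\dots,a_n)$ with $a_i=z+1-i$ if $i<z$ and $a_i=1$ if $i\ge z$. Then there is a unique positive integral diamond of Dynkin type $\mathbb{A}_n$ whose associated vector is $v_{n,z}$.
   Context: An $\mathbb{A}_n$-diamond over an integral domain $\mathbf{R}$ is a family $A=(a_{i,j})$ of elements of $\mathbf{R}$, with $a_{1,j}$ for $1\le j\le n+1$ and $a_{2,j}$ for $0\le j\le n$, such that (D1) $a_{2,0}=a_{1,n+1}=1$ and (D2) $a_{1,j}a_{2,j}-a_{2,j-1}a_{1,j+1}=1$ for $1\le j\le n$. For $\mathbf{R}=\mathbb{Z}$, $A$ is a positive integral diamond of Dynkin type $\mathbb{A}_n$ if it also satisfies (D3): there are integers $a,m_a$ with $1\le a\le\lfloor (n+2)/2\rfloor$ such that either $(a_{1,1},a_{2,1})=(a,a+m_a)$ or $(a_{1,1},a_{2,1})=(a+m_a,a)$, and $a_{1,2}=a^2+am_a-1$, where $1\le m_1\le n$ when $a=1$ and $0\le m_a\le n+2(1-a)$ when $a>1$. The vector associated to $A$ is its first column $v_A=(a_{1,1},\dots,a_{1,n})$. The vectors $v_{n,z}$ are called seed vectors. *)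

From mathcomp Require Import all_boot all_order all_algebra.
Set Implicit Arguments. Unset Strict Implicit. Unset Printing Implicit Defensive.
Import Order.TTheory GRing.Theory Num.Theory.
Local Open Scope ring_scope.

(* An integral A_n-diamond family: the first row stores a_{1,1..n+1}
   (position k holds a_{1,k+1}), the second row stores a_{2,0..n}
   (position k holds a_{2,k}). *)
Definition diamond (n : nat) : Type :=
  ({ffun 'I_n.+1 -> int} * {ffun 'I_n.+1 -> int})%type.

Definition a1 (n : nat) (A : diamond n) (j : nat) : int := A.1 (inord j.-1).
Definition a2 (n : nat) (A : diamond n) (j : nat) : int := A.2 (inord j).

Definition is_diamond (n : nat) (A : diamond n) : Prop :=
  a2 A 0 = 1 /\ a1 A n.+1 = 1 /\
  (forall j : nat, (1 <= j <= n)%N ->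
     a1 A j * a2 A j - a2 A j.-1 * a1 A j.+1 = 1).

Definition D3 (n : nat) (A : diamond n) : Prop :=
  exists (a m : int),
    1 <= a <= ((n.+2 %/ 2)%N)%:Z /\
    ((a1 A 1 = a /\ a2 A 1 = a + m) \/ (a1 A 1 = a + m /\ a2 A 1 = a)) /\
    a1 A 2 = a ^+ 2 + a * m - 1 /\
    (a = 1 -> 1 <= m <= n%:Z) /\
    (1 < a -> 0 <= m <= n%:Z + 2 * (1 - a)).

Definition positive_integral_diamond (n : nat) (A : diamond n) : Prop :=
  is_diamond A /\ D3 A.

Definition seed (z i : nat) : int :=
  if (i < z)%N then z%:Z + 1 - i%:Z else 1.

(** A diamond is determined by its first row: (D2) at index j+1 reads
    a_{1,j+1} a_{2,j+1} = 1 + a_{2,j} a_{1,j+2}, so once the a_{1,j} are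
    nonzero the second row is recovered from a_{2,0} = 1 step by step.
    For the seed vector the second row is a_{2,k} = 1 for k < z and
    a_{2,k} = k - z + 2 for k >= z, and (D3) holds with a = 1, m = z - 1
    and a_{1,1} = a + m, except for z = 1, where a = m = 1 and a_{1,1} = a. *)

From mathcomp Require Import all_boot all_order all_algebra.
From mathcomp Require Import zify lra.
Import Order.TTheory GRing.Theory Num.Theory.
Local Open Scope ring_scope.

Lemma diamond_ext n (A B : diamond n) :
  (forall j, (1 <= j <= n.+1)%N -> a1 A j = a1 B j) ->
  (forall j, (j <= n)%N -> a2 A j = a2 B j) -> A = B.
Proof.
case: A B => [A1 A2] [B1 B2] eq1 eq2; congr pair; apply/ffunP => k.
- by have := eq1 k.+1; rewrite /a1 /= inord_val ltn_ord; apply.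
- by have := eq2 k; rewrite /a2 /= inord_val -ltnS ltn_ord; apply.
Qed.

Lemma diamond_row2_determined n (A B : diamond n) :
  is_diamond A -> is_diamond B ->
  (forall j, (1 <= j <= n.+1)%N -> a1 A j = a1 B j) ->
  (forall j, (1 <= j <= n)%N -> a1 A j != 0) ->
  forall j, (j <= n)%N -> a2 A j = a2 B j.
Proof.
move=> [A0 [_ DA]] [B0 [_ DB]] eq1 nz1.
elim=> [|j IH] ltjn; first by rewrite A0 B0.
have rangej : (1 <= j.+1 <= n)%N by rewrite ltjn.
have lejn : (j <= n)%N := ltnW ltjn.
have r1 : (1 <= j.+1 <= n.+1)%N by lia.
have r2 : (1 <= j.+2 <= n.+1)%N by lia.
have := DA _ rangej; have := DB _ rangej.
rewrite /= IH // !eq1 // => DBj DAj.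
have : a1 B j.+1 * (a2 A j.+1 - a2 B j.+1) = 0 by rewrite mulrBr; lra.
move/eqP; rewrite mulf_eq0 -eq1 // (negbTE (nz1 _ rangej)) /=.
by rewrite subr_eq0 => /eqP.
Qed.

Lemma diamond_eq_row1 n (A B : diamond n) :
  is_diamond A -> is_diamond B ->
  (forall j, (1 <= j <= n.+1)%N -> a1 A j = a1 B j) ->
  (forall j, (1 <= j <= n)%N -> a1 A j != 0) -> A = B.
Proof.
move=> DA DB eq1 nz1; apply: diamond_ext => //.
exact: diamond_row2_determined.
Qed.

Definition seed2 (z k : nat) : int := if (k < z)%N then 1 else k%:Z - z%:Z + 2.

Lemma seed_gt0 z i : 0 < seed z i.
Proof. by rewrite /seed; case: ltnP => ?; lia. Qed.

Lemma seed_exchange z j : (1 <= z)%N -> (1 <= j)%N ->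
  seed z j * seed2 z j - seed2 z j.-1 * seed z j.+1 = 1.
Proof.
move=> z_gt0; case: j => // j _; rewrite /seed /seed2 /=.
by case: (ltnP j z) => ?; case: (ltnP j.+1 z) => ?; case: (ltnP j.+2 z) => ?;
  rewrite ?mul1r ?mulr1; lia.
Qed.

Section SeedDiamond.

Variables n z : nat.
Hypothesis z_gt0 : (1 <= z)%N.
Hypothesis z_le : (z <= n.+1)%N.

Definition seed_diamond : diamond n :=
  ([ffun k : 'I_n.+1 => seed z k.+1], [ffun k : 'I_n.+1 => seed2 z k]).

Lemma a1_seed_diamond j : (1 <= j <= n.+1)%N -> a1 seed_diamond j = seed z j.
Proof. by case: j => // j; rewrite /a1 ffunE /= => ltjn; rewrite inordK. Qed.

Lemma a2_seed_diamond j : (j <= n)%N -> a2 seed_diamond j = seed2 z j.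
Proof. by move=> lejn; rewrite /a2 ffunE inordK. Qed.

Lemma seed_diamond_is_diamond : is_diamond seed_diamond.
Proof.
split; first by rewrite a2_seed_diamond // /seed2 z_gt0.
split; first by rewrite a1_seed_diamond ?ltnSn // /seed ltnNge z_le.
move=> j /andP[j_gt0 lejn].
rewrite !a1_seed_diamond; try lia.
rewrite !a2_seed_diamond; try lia.
exact: seed_exchange.
Qed.

Lemma seed_diamond_D3 : (0 < n)%N -> D3 seed_diamond.
Proof.
move=> n_gt0; rewrite /D3 !a1_seed_diamond ?ltnS // a2_seed_diamond // /seed /seed2.
have [z_gt1 | z_le1] := ltnP 1 z.
- exists 1, (z%:Z - 1).
  split; [lia | split; [right; lia | split; [case: ltnP; lia | split; lia]]].
- have -> /= : z = 1%N by lia.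
  exists 1, 1; split; [lia | split; [left; lia | split; [lia | split; lia]]].
Qed.

End SeedDiamond.

Theorem proposition10 (n z : nat) (hn : (1 <= n)%N) (hz : (1 <= z <= n.+1)%N) :
  exists! A : diamond n,
    positive_integral_diamond A /\
    (forall i : nat, (1 <= i <= n)%N -> a1 A i = seed z i).
Proof.
have /andP[z_gt0 z_le] := hz.
have seed_row1 := a1_seed_diamond n z.
have seed_is_diamond := seed_diamond_is_diamond n z z_gt0 z_le.
exists (seed_diamond n z); split.
  split; first by split; last exact: seed_diamond_D3.
  by move=> i /andP[i_gt0 lein]; rewrite seed_row1 // i_gt0 ltnW.
move=> B [[B_diamond _] B_row1]; apply: diamond_eq_row1 => // j.
- (* the entry a_{1,n+1} is not part of the associated vector: (D1) fixes it *)
  case/andP=> j_gt0; rewrite leq_eqVlt ltnS => /orP[/eqP-> | lejn].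
    by rewrite seed_row1 ?ltnSn // (proj1 (proj2 B_diamond)) /seed ltnNge z_le.
  by rewrite seed_row1 ?B_row1 // j_gt0 // ltnW.
- by case/andP=> j_gt0 lejn; rewrite seed_row1 ?gt_eqF ?seed_gt0 // j_gt0 ltnW.
Qed.
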